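(* Suppose $k,K,A,B,n$ are natural numbers such that $\mathrm{LT}(K,n)\leq A$ and $\mathrm{LCS}_2(K,\mathcal P_k)\leq B$. Then $\mathrm{LT}(k,kn)\leq(2n-1)B+kA$.
   Context: $[k]=\{1,\dots,k\}$. Two subsequences of a word $w$ are twins if they are equal as words and use disjoint sets of positions of $w$; $\mathrm{LT}(w)$ is the maximum length of twins in $w$, and $\mathrm{LT}(k,n)=\min_{w\in[k]^n}\mathrm{LT}(w)$. $\mathcal{P}_k$ is the set of permutations on $k$ letters (words over $[k]$ with each letter exactly once). $\mathrm{LCS}(w,w')$ is the length of a longest common subsequence of $w,w'$; $\mathrm{LCS}_2(K,\mathcal P_k)$ is the minimum, over sets of $K$ distinct permutations in $\mathcal P_k$, of the maximum $\mathrm{LCS}$ of two distinct members. *)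

From mathcomp Require Import all_boot all_order all_fingroup.
Set Implicit Arguments. Unset Strict Implicit. Unset Printing Implicit Defensive.

(* Letters [k] = {1..k} are represented by 'I_k = {0..k-1}. *)

Definition word (k n : nat) := {ffun 'I_n -> 'I_k}.

Definition subw (k n : nat) (w : word k n) (S : {set 'I_n}) : seq 'I_k :=
  [seq w i | i <- enum S].

Definition twins (k n : nat) (w : word k n) (S T : {set 'I_n}) : bool :=
  [disjoint S & T] && (subw w S == subw w T).

Definition LTw (k n : nat) (w : word k n) : nat :=
  \max_(ST : {set 'I_n} * {set 'I_n} | twins w ST.1 ST.2) #|ST.1|.

(* LT(k,n) <= A, i.e. min_{w in [k]^n} LT(w) <= A. *)
Definition LT_le (k n A : nat) : Prop := exists w : word k n, LTw w <= A.

Definition LCS (T : eqType) (s t : seq T) : nat :=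
  \max_(m : (size s).-tuple bool | subseq (mask m s) t) size (mask m s).

Definition pword (k : nat) (p : {perm 'I_k}) : seq 'I_k := [seq p i | i <- enum 'I_k].

Definition maxLCS (k : nat) (P : {set {perm 'I_k}}) : nat :=
  \max_(pq : {perm 'I_k} * {perm 'I_k} | [&& pq.1 \in P, pq.2 \in P & pq.1 != pq.2])
     LCS (pword pq.1) (pword pq.2).

(* LCS_2(K, P_k) <= B, i.e. the min over K-element sets of permutations is <= B. *)
Definition LCS2_le (K k B : nat) : Prop :=
  exists P : {set {perm 'I_k}}, #|P| = K /\ maxLCS P <= B.

From mathcomp Require Import all_boot all_order all_fingroup.
From mathcomp Require Import zify.
Set Implicit Arguments. Unset Strict Implicit. Unset Printing Implicit Defensive.

(** Fix a word [w] of length [n] over [K] letters with [LT(w) <= A] and an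
    injection [f] of the letters into a set of permutations of [k] whose
    pairwise LCS is at most [B]. The word of length [kn] obtained by replacing
    each letter [a] of [w] by the permutation [f a] has no long twins. Pair up
    the matched positions of two twins. A pair joining two blocks carrying the
    same letter of [w] sits at the same offset in both blocks, so for a fixed
    offset the pairs project to twins of [w]: at most [kA] pairs. A pair joining
    blocks [i] and [j] with different letters is classified by [i + j]; both
    block indices are nondecreasing along the matching, so pairs with the same
    sum join the same two blocks and form a common subsequence of two distinct
    permutations: at most [(2n-1)B] pairs. *)

Section OrdinalSequences.
Variable n : nat.

Definition ord_lt : rel 'I_n := fun i j => i < j.

Lemma ord_lt_trans : transitive ord_lt.
Proof. by move=> j i l; apply: ltn_trans. Qed.

Lemma ord_lt_irr : irreflexive ord_lt.
Proof. by move=> i; rewrite /ord_lt ltnn. Qed.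

Lemma enum_filter_ord (S : {pred 'I_n}) : enum S = [seq i <- enum 'I_n | i \in S].
Proof. by rewrite enumT /enum_mem. Qed.

Lemma sorted_enum_ord_lt (S : {pred 'I_n}) : sorted ord_lt (enum S).
Proof.
rewrite enum_filter_ord; apply: (sorted_filter ord_lt_trans).
have -> : ord_lt = relpre val ltn by [].
by rewrite -sorted_map val_enum_ord iota_ltn_sorted.
Qed.

Lemma enum_set_sorted (s : seq 'I_n) : sorted ord_lt s -> enum [set i in s] = s.
Proof.
move=> s_sorted; apply: (irr_sorted_eq ord_lt_trans ord_lt_irr) => //.
  exact: sorted_enum_ord_lt.
by move=> i; rewrite mem_enum inE.
Qed.

Lemma card_set_sorted (s : seq 'I_n) : sorted ord_lt s -> #|[set i in s]| = size s.
Proof. by move=> s_sorted; rewrite cardE enum_set_sorted. Qed.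

Lemma sorted_subseq_enum_ord (s : seq 'I_n) : sorted ord_lt s -> subseq s (enum 'I_n).
Proof.
move=> s_sorted; rewrite -(enum_set_sorted s_sorted) (enum_filter_ord [set i in s]).
exact: filter_subseq.
Qed.

Definition pair_lt : rel ('I_n * 'I_n) :=
  [rel p q | ord_lt p.1 q.1 && ord_lt p.2 q.2].

Lemma pair_lt_trans : transitive pair_lt.
Proof.
move=> q p r /andP[lt1 lt2] /andP[lt3 lt4].
by apply/andP; split; [apply: ord_lt_trans lt1 lt3 | apply: ord_lt_trans lt2 lt4].
Qed.

Lemma sorted_pair_lt (z : seq ('I_n * 'I_n)) :
  sorted pair_lt z = sorted ord_lt (unzip1 z) && sorted ord_lt (unzip2 z).
Proof. by rewrite sorted_relI !sorted_map. Qed.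

End OrdinalSequences.

Lemma eq_map_unzip (S T U : eqType) (f : S -> U) (g : T -> U) (z : seq (S * T)) :
  map f (unzip1 z) = map g (unzip2 z) -> {in z, forall p, f p.1 = g p.2}.
Proof.
elim: z => [|q z IHz] //= [fg_q fg_z] p.
by rewrite inE => /orP[/eqP -> // | /(IHz fg_z)].
Qed.

Lemma count_sum_fibres (T : Type) (a : pred T) (key : T -> nat) (m : nat) (s : seq T) :
  all (fun x => key x < m) s ->
  count a s = \sum_(c < m) count (fun x => a x && (key x == c)) s.
Proof.
elim: s => [|x s IHs] /=; first by rewrite big1.
move=> /andP[key_x key_s]; rewrite big_split /= -IHs //; congr (_ + _).
rewrite (bigD1 (Ordinal key_x)) //= eqxx andbT big1 ?addn0 // => c c_neq.
have -> : (key x == c) = false by apply/eqP => key_c; case/eqP: c_neq; apply: val_inj.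
by rewrite andbF.
Qed.

Lemma constant_of_monotone_sum (T : eqType) (g h : T -> nat) (x0 : T) (s : seq T) :
  path (fun x y => (g x <= g y) && (h x <= h y)) x0 s ->
  {in s, forall x, g x + h x = g x0 + h x0} ->
  {in s, forall x, g x = g x0 /\ h x = h x0}.
Proof.
move=> s_path sum_s x x_s.
have le_trans : transitive (fun x y => (g x <= g y) && (h x <= h y)).
  move=> y1 y0 y2 /andP[le1 le2] /andP[le3 le4].
  by rewrite (leq_trans le1 le3) (leq_trans le2 le4).
have /andP[le_g le_h] := allP (order_path_min le_trans s_path) x x_s.
by have := sum_s x x_s; lia.
Qed.

Lemma leq_LCS (T : eqType) (c s t : seq T) :
  subseq c s -> subseq c t -> size c <= LCS s t.
Proof.
move=> /subseqP[m size_m ->] sub_t.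
have size_m' : size m == size s by apply/eqP.
exact: (@leq_bigmax_cond _ (fun m : (size s).-tuple bool => subseq (mask m s) t)
  (fun m => size (mask m s)) (Tuple size_m')).
Qed.

Lemma subseq_pword (k : nat) (p : {perm 'I_k}) (s : seq 'I_k) :
  sorted (@ord_lt k) s -> subseq (map p s) (pword p).
Proof. by move=> s_sorted; apply/map_subseq/sorted_subseq_enum_ord. Qed.

Lemma leq_maxLCS (k : nat) (P : {set {perm 'I_k}}) (p q : {perm 'I_k}) :
  p \in P -> q \in P -> p != q -> LCS (pword p) (pword q) <= maxLCS P.
Proof.
move=> p_P q_P p_neq_q.
apply: (@leq_bigmax_cond _
  (fun pq : {perm 'I_k} * {perm 'I_k} => [&& pq.1 \in P, pq.2 \in P & pq.1 != pq.2])
  (fun pq => LCS (pword pq.1) (pword pq.2)) (p, q)).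
by rewrite /= p_P q_P p_neq_q.
Qed.

Section Alignments.
Variables (k n : nat) (w : word k n).

(* A matching of twins: the pairs of positions carrying the same letter in the
   two subsequences, listed from left to right. *)
Definition alignment (z : seq ('I_n * 'I_n)) : Prop :=
  [/\ sorted (@pair_lt n) z, {in z, forall p, w p.1 = w p.2}
    & {in z &, forall p q, p.1 != q.2}].

Lemma alignment_filter (a : pred ('I_n * 'I_n)) z :
  alignment z -> alignment (filter a z).
Proof.
case=> z_sorted z_eq z_dis; split.
- exact: (sorted_filter (@pair_lt_trans n) a z_sorted).
- by move=> p; rewrite mem_filter => /andP[_ /z_eq].
- by move=> p q; rewrite !mem_filter => /andP[_ p_z] /andP[_ q_z]; apply: z_dis.
Qed.

Lemma alignment_size_le_LTw z : alignment z -> size z <= LTw w.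
Proof.
case; rewrite sorted_pair_lt => /andP[s_sorted t_sorted] z_eq z_dis.
set s := unzip1 z; set t := unzip2 z.
have twins_st : twins w [set i in s] [set i in t].
  apply/andP; split.
    apply/pred0P => i /=; rewrite !inE.
    apply/negP => /andP[/mapP[p p_z ->] /mapP[q q_z p_q]].
    by case/eqP: (z_dis p q p_z q_z).
  rewrite /subw !enum_set_sorted // -!map_comp; apply/eqP/eq_in_map => p.
  exact: z_eq.
have := @leq_bigmax_cond _ (fun ST : {set 'I_n} * {set 'I_n} => twins w ST.1 ST.2)
  (fun ST => #|ST.1|) (_, _) twins_st.
by rewrite /= card_set_sorted // size_map.
Qed.

Lemma LTw_le_alignments (m : nat) :
  (forall z, alignment z -> size z <= m) -> LTw w <= m.
Proof.
move=> le_m; apply/bigmax_leqP => -[S T] /= /andP[disj_ST /eqP subw_ST].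
set z := zip (enum S) (enum T).
have size_ST : size (enum S) = size (enum T).
  by rewrite -(size_map w) -[map w _]/(subw w S) subw_ST size_map.
have [z1 z2] : unzip1 z = enum S /\ unzip2 z = enum T.
  by rewrite unzip1_zip ?unzip2_zip ?size_ST.
rewrite cardE -z1 size_map; apply: le_m; split.
- by rewrite sorted_pair_lt z1 z2 !sorted_enum_ord_lt.
- by apply: eq_map_unzip; rewrite z1 z2.
- move=> p q p_z q_z; apply/eqP => pq.
  have p_S : p.1 \in S by rewrite -mem_enum -z1; apply: map_f.
  have q_T : q.2 \in T by rewrite -mem_enum -z2; apply: map_f.
  by rewrite pq in p_S; move/pred0P/(_ q.2): disj_ST; rewrite /= p_S q_T.
Qed.

Lemma LTw_le_length : LTw w <= n.
Proof.
by apply/bigmax_leqP => ST _; apply: leq_trans (max_card _) _; rewrite card_ord.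
Qed.

End Alignments.

Section Blocks.
Variables k n : nat.
Hypothesis k_gt0 : 0 < k.

Lemma blk_subproof (x : 'I_(k * n)) : x %/ k < n.
Proof. by rewrite ltn_divLR // (mulnC n) ltn_ord. Qed.

Definition blk (x : 'I_(k * n)) : 'I_n := Ordinal (blk_subproof x).
Definition off (x : 'I_(k * n)) : 'I_k := Ordinal (ltn_pmod x k_gt0).

Lemma blk_off_inj (x y : 'I_(k * n)) : blk x = blk y -> off x = off y -> x = y.
Proof.
move=> /(congr1 val) /= blk_xy /(congr1 val) /= off_xy; apply: val_inj.
by rewrite /= (divn_eq x k) (divn_eq y k) blk_xy off_xy.
Qed.

Lemma leq_blk (x y : 'I_(k * n)) : x <= y -> blk x <= blk y.
Proof. exact: leq_div2r. Qed.

Lemma ltn_blk_same_off (x y : 'I_(k * n)) : x < y -> off x = off y -> blk x < blk y.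
Proof.
move=> lt_xy off_xy; rewrite ltn_neqAle (leq_blk (ltnW lt_xy)) andbT.
by apply/eqP => /val_inj blk_xy; move: lt_xy; rewrite (blk_off_inj blk_xy off_xy) ltnn.
Qed.

Lemma ltn_off_same_blk (x y : 'I_(k * n)) : x < y -> blk x = blk y -> off x < off y.
Proof.
move=> + /(congr1 val) /= blk_xy.
by rewrite {1}(divn_eq x k) {1}(divn_eq y k) blk_xy ltn_add2l.
Qed.

Lemma blk_sum_lt (x y : 'I_(k * n)) : blk x + blk y < 2 * n - 1.
Proof. by have := ltn_ord (blk x); have := ltn_ord (blk y); lia. Qed.

Lemma sorted_map_blk (s : seq 'I_(k * n)) (o : 'I_k) :
  sorted (@ord_lt _) s -> {in s, forall x, off x = o} -> sorted (@ord_lt _) (map blk s).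
Proof.
move=> s_sorted off_s; apply: (homo_sorted_in (P := mem s)) s_sorted; last exact/allP.
by move=> x y x_s y_s lt_xy; apply: ltn_blk_same_off; rewrite ?off_s.
Qed.

Lemma sorted_map_off (s : seq 'I_(k * n)) (b : 'I_n) :
  sorted (@ord_lt _) s -> {in s, forall x, blk x = b} -> sorted (@ord_lt _) (map off s).
Proof.
move=> s_sorted blk_s; apply: (homo_sorted_in (P := mem s)) s_sorted; last exact/allP.
by move=> x y x_s y_s lt_xy; apply: ltn_off_same_blk; rewrite ?blk_s.
Qed.

Section Concatenation.
Variables (K : nat) (f : 'I_K -> {perm 'I_k}) (w : word K n).

Definition concat_word : word k (k * n) := [ffun x => f (w (blk x)) (off x)].
Local Notation u := concat_word.

Lemma matched_alignment_le z (o : 'I_k) :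
  alignment u z -> {in z, forall p, w (blk p.1) = w (blk p.2) /\ off p.1 = o} ->
  size z <= LTw w.
Proof.
case; rewrite sorted_pair_lt => /andP[s_sorted t_sorted] z_eq z_dis matched.
have off2 p : p \in z -> off p.2 = o.
  move=> p_z; have [w_eq <-] := matched p p_z.
  by move: (z_eq p p_z); rewrite !ffunE w_eq => /perm_inj.
rewrite -(size_map (fun p => (blk p.1, blk p.2))); apply: alignment_size_le_LTw.
split.
- rewrite sorted_pair_lt; apply/andP; split.
    rewrite [unzip1 _](_ : _ = map blk (unzip1 z)); last by rewrite /unzip1 -!map_comp.
    apply: (@sorted_map_blk _ o s_sorted).
    by move=> _ /mapP[p /matched[_ <-] ->].
  rewrite [unzip2 _](_ : _ = map blk (unzip2 z)); last by rewrite /unzip2 -!map_comp.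
  apply: (@sorted_map_blk _ o t_sorted).
  by move=> _ /mapP[p /off2 <- ->].
- by move=> _ /mapP[p /matched[w_eq _] ->].
- move=> _ _ /mapP[p p_z ->] /mapP[q q_z ->] /=.
  apply: contra_neq (z_dis p q p_z q_z) => blk_pq; apply: blk_off_inj => //.
  by rewrite off2 //; case: (matched p p_z).
Qed.

Variable P : {set {perm 'I_k}}.
Hypothesis f_P : forall a, f a \in P.
Hypothesis f_inj : injective f.

Lemma mismatched_alignment_le z (c : nat) :
  alignment u z ->
  {in z, forall p, w (blk p.1) != w (blk p.2) /\ blk p.1 + blk p.2 = c} ->
  size z <= maxLCS P.
Proof.
case: z => [|p0 z] //; set zz := p0 :: z; case=> zz_sorted zz_eq _ mismatched.
have sum_zz : {in zz, forall p, blk p.1 + blk p.2 = blk p0.1 + blk p0.2}.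
  by move=> p /mismatched[_ ->]; rewrite (mismatched p0 (mem_head _ _)).2.
have same_blocks : {in zz, forall p, blk p.1 = blk p0.1 /\ blk p.2 = blk p0.2}.
  move=> p; rewrite inE => /orP[/eqP -> // | p_z].
  have [blk1 blk2] : (blk p.1 : nat) = blk p0.1 /\ (blk p.2 : nat) = blk p0.2.
    apply: (constant_of_monotone_sum (g := fun p => blk p.1) (h := fun p => blk p.2)) p_z.
      by apply: sub_path zz_sorted => q r /andP[lt1 lt2]; rewrite !leq_blk // ltnW.
    by move=> q q_z; apply: sum_zz; rewrite inE q_z orbT.
  by split; apply: val_inj.
have [a_neq_b _] := mismatched p0 (mem_head _ _).
move: zz_sorted; rewrite sorted_pair_lt => /andP[s_sorted t_sorted].
have common1 : map (fun p => u p.1) zz = map (f (w (blk p0.1))) (map off (unzip1 zz)).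
  by rewrite -!map_comp; apply/eq_in_map => p /same_blocks[blk1 _]; rewrite /= ffunE blk1.
have common2 : map (fun p => u p.1) zz = map (f (w (blk p0.2))) (map off (unzip2 zz)).
  rewrite -!map_comp; apply/eq_in_map => p p_zz.
  by rewrite /= zz_eq // ffunE; case: (same_blocks p p_zz) => _ ->.
have f_neq : f (w (blk p0.1)) != f (w (blk p0.2)) by rewrite (inj_eq f_inj).
apply: leq_trans (leq_maxLCS (f_P _) (f_P _) f_neq).
rewrite -(size_map (fun p => u p.1)); apply: leq_LCS.
- rewrite common1; apply: subseq_pword; apply: (@sorted_map_off _ (blk p0.1) s_sorted).
  by move=> _ /mapP[p /same_blocks[blk1 _] ->].
- rewrite common2; apply: subseq_pword; apply: (@sorted_map_off _ (blk p0.2) t_sorted).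
  by move=> _ /mapP[p /same_blocks[_ blk2] ->].
Qed.

Lemma LTw_concat_word : LTw u <= (2 * n - 1) * maxLCS P + k * LTw w.
Proof.
apply: LTw_le_alignments => z z_align.
pose matched p := w (blk p.1) == w (blk p.2).
rewrite -(count_predC matched z) addnC leq_add //.
- rewrite (@count_sum_fibres _ _ (fun p => blk p.1 + blk p.2) (2 * n - 1)); last first.
    by apply/allP => p _; apply: blk_sum_lt.
  apply: (@leq_trans (\sum_(c < 2 * n - 1) maxLCS P)); last first.
    by rewrite sum_nat_const card_ord.
  apply: leq_sum => c _.
  rewrite -size_filter; apply: (mismatched_alignment_le (c := c)).
    exact: alignment_filter.
  by move=> p; rewrite mem_filter => /andP[/andP[w_neq /eqP sum_c] _].
- rewrite (@count_sum_fibres _ _ (fun p => off p.1) k); last first.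
    by apply/allP => p _; apply: ltn_ord.
  apply: (@leq_trans (\sum_(o < k) LTw w)); last by rewrite sum_nat_const card_ord.
  apply: leq_sum => o _.
  rewrite -size_filter; apply: (matched_alignment_le (o := o)).
    exact: alignment_filter.
  move=> p; rewrite mem_filter => /andP[/andP[/eqP w_eq /eqP off_o] _].
  by split => //; apply: val_inj.
Qed.

End Concatenation.
End Blocks.

Theorem lemma21 (k K A B n : nat) :
  LT_le K n A -> LCS2_le K k B ->
  LT_le k (k * n) ((2 * n - 1) * B + k * A).
Proof.
move=> [w LTw_le_A] [P [card_P maxLCS_le_B]].
have [k0 | k_gt0] := posnP k.
  subst k; exists [ffun x => cast_ord (mul0n n) x].
  by apply: leq_trans (LTw_le_length _) _; rewrite mul0n.
pose f (a : 'I_K) : {perm 'I_k} := enum_val (cast_ord (esym card_P) a).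
have f_P a : f a \in P by apply: enum_valP.
have f_inj : injective f by move=> a b /enum_val_inj /cast_ord_inj.
exists (concat_word k_gt0 f w).
apply: leq_trans (LTw_concat_word k_gt0 w f_P f_inj) _.
by rewrite leq_add ?leq_mul2l ?maxLCS_le_B ?LTw_le_A ?orbT.
Qed.
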